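(* Let $f$ be an additive function from the positive integers to the nonnegative integers with $f(p)\ge1$ for every prime $p$. Let $n=\prod_{i=1}^k p_i^{e_i}$ with distinct primes $p_i$ and $e_i\ge1$. Then $n$ is $f$-practical if and only if $$f(p_i^e)\le 1+\sum_{\substack{d\mid n\\ f(d)<f(p_i^e)}} f(d)$$ holds for every $1\le i\le k$ and every $1\le e\le e_i$.
   Context: $f$ additive means $f(ab)=f(a)+f(b)$ whenever $\gcd(a,b)=1$ (so $f(1)=0$). $S_f(n)=\sum_{d\mid n}f(d)$. A positive integer $n$ is $f$-practical if every positive integer $m\le S_f(n)$ equals $\sum_{d\in\mathcal{D}}f(d)$ for some set $\mathcal{D}$ of distinct divisors of $n$. *)

From mathcomp Require Import all_boot.
Set Implicit Arguments. Unset Strict Implicit. Unset Printing Implicit Defensive.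

Definition additive (f : nat -> nat) : Prop :=
  forall a b, 0 < a -> 0 < b -> coprime a b -> f (a * b) = f a + f b.

Definition S_f (f : nat -> nat) (n : nat) : nat := \sum_(d <- divisors n) f d.

(* n is f-practical: every 1 <= m <= S_f(n) is a sum of f over a set of
   distinct divisors of n (a subsequence of the duplicate-free list
   divisors n). *)
Definition f_practical (f : nat -> nat) (n : nat) : Prop :=
  forall m, 0 < m -> m <= S_f f n ->
    exists D : seq nat, subseq D (divisors n) /\ \sum_(d <- D) f d = m.

From mathcomp Require Import all_boot.
From mathcomp Require Import zify.

(* Every m up to the total weight of a list is a sub-sum iff each weight is at
   most 1 plus the sum of the strictly smaller weights (Brown's criterion;
   sufficiency by sorting the list by decreasing weight and peeling off a
   largest element).
   For the divisors of n the criterion reduces to prime powers: writing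
   d = p^e m with p not dividing m, additivity gives f d = f (p^e) + f m, and
   p^e, m are distinct divisors of weight below f d unless one of the two
   weights vanishes. *)

Section SubseqSums.

Context {T : eqType} (w : T -> nat).

Definition subseq_sum (s : seq T) (m : nat) : Prop :=
  exists D, subseq D s /\ \sum_(x <- D) w x = m.

Definition brown_condition (s : seq T) : Prop :=
  forall x, x \in s -> w x <= 1 + \sum_(y <- s | w y < w x) w y.

Lemma leq_sum_subseq (P : pred T) {D s : seq T} :
  subseq D s -> \sum_(x <- D | P x) w x <= \sum_(x <- s | P x) w x.
Proof.
by case/perm_to_subseq=> t /(perm_big _) ->; rewrite big_cat leq_addr.
Qed.

Lemma subseq_sum_perm {s t : seq T} {m : nat} :
  perm_eq s t -> subseq_sum s m -> subseq_sum t m.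
Proof.
move=> /permP eq_st [D [sub_D <-]].
have /count_subseqP[D' sub_D' perm_D'] : forall x, count_mem x D <= count_mem x t.
  by move=> x; rewrite -eq_st leq_count_subseq.
by exists D'; rewrite (perm_big _ perm_D').
Qed.

Lemma brown_condition_perm {s t : seq T} :
  perm_eq s t -> brown_condition s -> brown_condition t.
Proof.
move=> perm_st brown_s x; rewrite -(perm_mem perm_st) => /brown_s.
by rewrite (perm_big _ perm_st).
Qed.

Let geq_w : rel T := fun x y => w y <= w x.

Lemma subseq_sum_sorted (s : seq T) :
  sorted geq_w s -> brown_condition s ->
  forall m, m <= \sum_(x <- s) w x -> subseq_sum s m.
Proof.
elim: s => [|x s IHs] sorted_xs brown_xs m.
  by rewrite big_nil leqn0 => /eqP ->; exists [::]; rewrite big_nil.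
have w_le_x : {in s, forall y, w y <= w x}.
  apply/allP/(order_path_min _ sorted_xs) => y z t le_zy le_yt.
  exact: leq_trans le_yt le_zy.
have brown_s : brown_condition s.
  move=> y ys; have := brown_xs y (@mem_behead _ (x :: s) y ys).
  by rewrite big_cons ltnNge w_le_x.
have {IHs}IH := IHs (path_sorted sorted_xs) brown_s.
have w_x_le : w x <= 1 + \sum_(y <- s) w y.
  have := brown_xs x (mem_head x s); rewrite big_cons ltnn => /leq_trans; apply.
  by rewrite leq_add2l -big_filter leq_sum_subseq ?filter_subseq.
rewrite big_cons => le_m.
have [le_m_s | lt_s_m] := leqP m (\sum_(y <- s) w y).
  have [D [sub_D <-]] := IH m le_m_s.
  by exists D; split; first exact: subseq_trans sub_D (subseq_cons s x).
have [D [sub_D sum_D]] := IH (m - w x) ltac:(lia).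
exists (x :: D); split; first by rewrite /= eqxx.
by rewrite big_cons sum_D; lia.
Qed.

Lemma brown_subseq_sum (s : seq T) :
  brown_condition s -> forall m, m <= \sum_(x <- s) w x -> subseq_sum s m.
Proof.
have perm_s : perm_eq s (sort geq_w s) by rewrite perm_sym perm_sort.
move=> /(brown_condition_perm perm_s) brown_sort m le_m.
rewrite perm_sym in perm_s; apply: (subseq_sum_perm perm_s).
apply: subseq_sum_sorted => //; last by rewrite (perm_big _ perm_s).
by apply: sort_sorted => x y; apply: leq_total.
Qed.

Lemma subseq_sum_brown (s : seq T) :
  (forall m, 0 < m -> m <= \sum_(x <- s) w x -> subseq_sum s m) ->
  brown_condition s.
Proof.
move=> sums_s x xs; set L := \sum_(y <- s | w y < w x) w y.
rewrite leqNgt; apply/negP => lt_Lx.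
have le_w_sum y t : y \in t -> w y <= \sum_(z <- t) w z.
  by move=> yt; rewrite (big_rem _ yt) leq_addr.
have le_L_sum : 1 + L <= \sum_(y <- s) w y.
  exact: ltnW (leq_trans lt_Lx (le_w_sum x s xs)).
have [D [sub_D sum_D]] := sums_s (1 + L) isT le_L_sum.
have [all_small | /allPn[y yD]] := boolP (all (fun y => w y < w x) D).
  have := leq_sum_subseq (fun y => w y < w x) sub_D.
  by rewrite -big_filter (all_filterP all_small) sum_D ltnn.
rewrite -leqNgt => le_xy.
by have := leq_trans le_xy (le_w_sum y D yD); rewrite sum_D leqNgt lt_Lx.
Qed.

End SubseqSums.

Lemma additive_f1 (f : nat -> nat) : additive f -> f 1 = 0.
Proof. by move=> addf; have := addf 1 1 isT isT isT; rewrite muln1; lia. Qed.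

Lemma brown_condition_divisors (f : nat -> nat) (n : nat) :
  additive f -> 0 < n ->
  (forall p e, prime p -> p %| n -> 1 <= e <= logn p n ->
     f (p ^ e) <= 1 + \sum_(d <- divisors n | f d < f (p ^ e)) f d) ->
  brown_condition f (divisors n).
Proof.
move=> addf n_gt0 prime_power_cond d; rewrite -dvdn_divisors //.
elim/ltn_ind: d => d IHd d_dvd_n.
have [-> | d_neq1] := eqVneq d 1; first by rewrite additive_f1.
have d_gt0 : 0 < d := dvdn_gt0 n_gt0 d_dvd_n.
have p_prime : prime (pdiv d) by apply: pdiv_prime; lia.
set p := pdiv d in p_prime *; set e := logn p d.
have [m p_coprime_m d_eq] := pfactor_coprime p_prime d_gt0.
have e_gt0 : 0 < e by rewrite logn_gt0 mem_primes p_prime d_gt0 pdiv_dvd.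
have pe_gt1 : 1 < p ^ e by rewrite -[1](expn0 p) ltn_exp2l ?prime_gt1.
have m_gt0 : 0 < m by move: d_gt0; rewrite d_eq muln_gt0 => /andP[].
have f_d : f d = f (p ^ e) + f m.
  by rewrite d_eq mulnC addf // ?coprimeXl // ltnW.
have pe_dvd_n : p ^ e %| n by apply: dvdn_trans d_dvd_n; rewrite d_eq dvdn_mull.
have m_dvd_n : m %| n by apply: dvdn_trans d_dvd_n; rewrite d_eq dvdn_mulr.
have [fm0 | fm_gt0] := posnP (f m).
  rewrite f_d fm0 addn0; apply: prime_power_cond => //.
    exact: dvdn_trans (pdiv_dvd d) d_dvd_n.
  by rewrite e_gt0 -pfactor_dvdn.
have [fpe0 | fpe_gt0] := posnP (f (p ^ e)).
  by rewrite f_d fpe0; apply: IHd; rewrite // d_eq ltn_Pmulr.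
have pe_neq_m : p ^ e != m.
  by apply: contraTneq p_coprime_m => <-; rewrite prime_coprime // negbK dvdn_exp.
have lt_pe_d : f (p ^ e) < f d by rewrite f_d -addn1 leq_add2l.
have lt_m_d : f m < f d by rewrite f_d -add1n leq_add2r.
apply: leq_trans (leq_addl 1 _).
apply: (@leq_trans (\sum_(y <- [:: p ^ e; m] | f y < f d) f y)).
  by rewrite !big_cons big_nil lt_pe_d lt_m_d f_d addn0.
apply: (uniq_sub_le_big leqnn (fun a b => leq_addr b a)).
- by rewrite /= inE pe_neq_m.
- exact: divisors_uniq.
- by move=> y; rewrite !inE -!dvdn_divisors // => /orP[]/eqP->.
Qed.

Theorem lemma6p1 (f : nat -> nat) (n : nat) :
  additive f ->
  (forall p, prime p -> 1 <= f p) ->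
  0 < n ->
  f_practical f n <->
  (forall p e, prime p -> p %| n -> 1 <= e <= logn p n ->
     f (p ^ e) <= 1 + \sum_(d <- divisors n | f d < f (p ^ e)) f d).
Proof.
move=> addf _ n_gt0; split => [practical p e p_prime _ /andP[_ le_e] | cond].
  by apply: subseq_sum_brown practical _ _; rewrite -dvdn_divisors ?pfactor_dvdn.
move=> m _; apply: brown_subseq_sum.
exact: brown_condition_divisors addf n_gt0 cond.
Qed.
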